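(* Let $G=H\oplus K$ be a $2$-sum or a $3$-sum of $2$-connected cubic graphs $H$ and $K$, where $H$ is a snark with $\pi(H)\ge 5$ and $K$ is $3$-edge-colourable. If $u$ is an apex of $H$ different from the distinguished vertex of $H$ for the $3$-sum (in the case of a $3$-sum), then $u$ is an apex of $G$.
   Context: Graphs are finite; loops and multiple edges are allowed. A snark is a $2$-connected cubic graph with no proper $3$-edge-colouring. The perfect matching index $\pi(G)$ is the smallest number of perfect matchings of $G$ whose union is $E(G)$. For a vertex $v$, $G^v$ denotes the graph obtained by inflating $v$ to a triangle (deleting $v$, adding a new triangle, and attaching the three edge-ends formerly at $v$ to its three distinct vertices). A vertex $v$ of a snark $G$ is an apex if $\pi(G^v)=4$. A $2$-sum with distinguished edges $e\in E(H)$, $f\in E(K)$ deletes $e,f$ and joins the $2$-valent vertices of $H-e$ to those of $K-f$ by two new independent edges. A $3$-sum with distinguished vertices $u'\in V(H)$, $v'\in V(K)$ deletes $u',v'$ and joins the three dangling edge-ends formerly at $u'$ bijectively to those formerly at $v'$. *)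

From mathcomp Require Import all_boot.
Set Implicit Arguments. Unset Strict Implicit. Unset Printing Implicit Defensive.

(* A graph: finite vertex type, finite edge type, and for each edge its two
   (unordered) ends.  A loop is an edge with equal ends. *)
Record graph := Graph { vert : finType; edge : finType; ends : edge -> vert * vert }.

Section Basics.
Variable G : graph.

(* darts = edge-ends (half-edges): (e,false) is the first end, (e,true) the second *)
Definition dart := (edge G * bool)%type.
Definition dend (d : dart) : vert G := if d.2 then (ends d.1).2 else (ends d.1).1.
Definition flip (d : dart) : dart := (d.1, ~~ d.2).

Definition incident (v : vert G) (e : edge G) : bool :=
  ((ends e).1 == v) || ((ends e).2 == v).
Definition is_loop (e : edge G) : bool := (ends e).1 == (ends e).2.

(* degree counts edge-ends, so a loop contributes 2 *)
Definition deg (v : vert G) : nat := #|[set d : dart | dend d == v]|.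
Definition cubic : Prop := forall v, deg v = 3.

Definition adj_minus (e : edge G) : rel (vert G) :=
  fun x y => [exists f, (f != e) && ((ends f == (x, y)) || (ends f == (y, x)))].
Definition adj : rel (vert G) :=
  fun x y => [exists f, (ends f == (x, y)) || (ends f == (y, x))].

Definition connected : Prop := forall x y, connect adj x y.
(* 2-connected cubic graphs are exactly the connected bridgeless ones *)
Definition two_connected : Prop :=
  connected /\ forall e x y, connect (adj_minus e) x y.

Definition perfect_matching (M : {set edge G}) : Prop :=
  (forall e, e \in M -> ~~ is_loop e) /\
  (forall v, #|[set e in M | incident v e]| = 1).

Definition pm_cover (k : nat) : Prop :=
  exists Ms : seq {set edge G},
    [/\ size Ms <= k, (forall M, M \in Ms -> perfect_matching M)
      & forall e, exists2 M, M \in Ms & e \in M].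

Definition pmi_eq (n : nat) : Prop := pm_cover n /\ forall m, pm_cover m -> n <= m.
(* pi(G) >= n  (pi = infinity if there is no cover) *)
Definition pmi_ge (n : nat) : Prop := forall m, pm_cover m -> n <= m.

Definition col3 : Prop :=
  exists c : edge G -> 'I_3,
    (forall e, ~~ is_loop e) /\
    (forall v e f, e != f -> incident v e -> incident v f -> c e != c f).

Definition snark : Prop := two_connected /\ cubic /\ ~ col3.

End Basics.

Section Inflate.
Variables (G : graph) (v : vert G).

Definition dart_at := {d : dart G | dend d == v}.
Definition ivert := ({x : vert G | x != v} + dart_at)%type.
(* triangle edges: one for each pair of distinct edge-ends at v *)
Definition tri_edge := {p : dart_at * dart_at | (enum_rank p.1 < enum_rank p.2)%N}.
Definition iedge := (edge G + tri_edge)%type.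

(* an old edge-end at v is reattached to its own new triangle vertex *)
Definition iend (d : dart G) : ivert :=
  (if dend d == v as c return (dend d == v) = c -> ivert
   then fun h => inr (exist (fun d => dend d == v) d h)
   else fun h => inl (exist (fun x => x != v) (dend d) (negbT h))) erefl.

Definition iends (e : iedge) : ivert * ivert :=
  match e with
  | inl e => (iend (e, false), iend (e, true))
  | inr p => (inr (val p).1, inr (val p).2)
  end.

Definition inflate : graph := Graph iends.
End Inflate.

Definition apex (G : graph) (v : vert G) : Prop :=
  snark G /\ pmi_eq (inflate v) 4.

(* Edge e = ab of H and f = cd of K are deleted and the new edges are
   a-c, b-d (sw = false) or a-d, b-c (sw = true); the new edges reuse the
   names e and f. *)
Section Sum2.
Variables (H K : graph) (e : edge H) (f : edge K) (sw : bool).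

Definition s2vert := (vert H + vert K)%type.
Definition s2edge := (edge H + edge K)%type.
Definition s2ends (g : s2edge) : s2vert * s2vert :=
  match g with
  | inl g => if g == e then (inl (ends e).1, inr (if sw then (ends f).2 else (ends f).1))
             else (inl (ends g).1, inl (ends g).2)
  | inr g => if g == f then (inl (ends e).2, inr (if sw then (ends f).1 else (ends f).2))
             else (inr (ends g).1, inr (ends g).2)
  end.
Definition sum2 : graph := Graph s2ends.
End Sum2.

Lemma nincid1 (G : graph) (u : vert G) (g : edge G) :
  ~~ incident u g -> (ends g).1 != u.
Proof. by rewrite /incident negb_or => /andP[]. Qed.
Lemma nincid2 (G : graph) (u : vert G) (g : edge G) :
  ~~ incident u g -> (ends g).2 != u.
Proof. by rewrite /incident negb_or => /andP[]. Qed.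
Lemma and3_2 (a b c : bool) : [&& a, b & c] -> b.
Proof. by case/and3P. Qed.
Lemma and3_3 (a b c : bool) : [&& a, b & c] -> c.
Proof. by case/and3P. Qed.

(* phi : dart H -> dart K is the bijection between the edge-ends at u' and
   those at v' (see bij_darts); the edge of H carrying the end d at u' and
   the edge of K carrying the end phi d at v' are merged into one edge. *)
Section Sum3.
Variables (H K : graph) (u' : vert H) (v' : vert K) (phi : dart H -> dart K).

Definition bij_darts : Prop :=
  [/\ forall d, dend d == u' -> dend (phi d) == v',
      {in [pred d | dend d == u'] &, injective phi}
    & forall d', dend d' == v' -> exists2 d, dend d == u' & phi d = d'].

Definition s3vert := ({x : vert H | x != u'} + {y : vert K | y != v'})%type.
Definition s3new (d : dart H) : bool :=
  [&& dend d == u', dend (flip d) != u' & dend (flip (phi d)) != v'].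
Definition s3edge :=
  ({g : edge H | ~~ incident u' g} + {g : edge K | ~~ incident v' g}
   + {d : dart H | s3new d})%type.
Definition s3ends (g : s3edge) : s3vert * s3vert :=
  match g with
  | inl (inl g) => (inl (exist (fun x => x != u') _ (nincid1 (valP g))),
                    inl (exist (fun x => x != u') _ (nincid2 (valP g))))
  | inl (inr g) => (inr (exist (fun x => x != v') _ (nincid1 (valP g))),
                    inr (exist (fun x => x != v') _ (nincid2 (valP g))))
  | inr d => (inl (exist (fun x => x != u') _ (and3_2 (valP d))),
              inr (exist (fun x => x != v') _ (and3_3 (valP d))))
  end.
Definition sum3 : graph := Graph s3ends.

Definition sum3_vH (u : vert H) (hu : u != u') : vert sum3 :=
  inl (exist (fun x => x != u') u hu).
End Sum3.

From mathcomp Require Import all_boot zify.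
Set Implicit Arguments. Unset Strict Implicit. Unset Printing Implicit Defensive.

(* A perfect matching of [G^v] is determined by its trace on [E(G)]: a spanning subgraph of
   degree 1 everywhere except possibly degree 3 at [v].  Hence [pi(G^v) <= k] iff [E(G)] is
   covered by [k] such traces in which every edge at [v] lies in a trace of degree 1 at [v];
   for [k <= 3] all traces are then perfect matchings, so [G] is 3-edge-colourable.
   In a 2-sum or 3-sum with a 3-edge-colourable [K], every trace in [H] extends by a colour
   class of [K] chosen to agree on the connecting edges, which turns a cover witnessing
   [pi(H^u) = 4] into one for [G^u].  The sum is again a snark: 2-connectivity follows from
   the cut criterion, and a parity argument on the cut separating [H] from [K] transfers a
   3-edge-colouring of the sum back to [H]. *)

(** * Counting, cuts and colourings *)

Lemma card_set_sum (T : finType) (P : pred T) : #|[set x | P x]| = \sum_x P x.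
Proof. by rewrite -sum1_card big_mkcond; apply: eq_bigr => x _; rewrite inE; case: (P x). Qed.

Lemma sum_pred1 (T : finType) (P : pred T) (a : T) : \sum_x (P x && (a == x)) = P a.
Proof.
rewrite (bigD1 a) //= eqxx andbT big1 ?addn0 // => x xa.
by rewrite eq_sym (negbTE xa) andbF.
Qed.

Lemma sum_eq1 (T : finType) (a : T) : \sum_x ((a == x) : nat) = 1.
Proof. exact: (sum_pred1 predT). Qed.

Lemma sum_eq_in (T : finType) (A : {pred T}) (a : T) :
  \sum_(x in A) ((a == x) : nat) = (a \in A).
Proof.
rewrite big_mkcond (bigD1 a) //= big1 ?addn0 => [|x xa]; first by rewrite eqxx; case: (a \in A).
by rewrite eq_sym (negbTE xa); case: (x \in A).
Qed.

Lemma card3_third (T : finType) (p q : T) : #|T| = 3 -> p != q ->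
  exists r : T, [/\ r != p, r != q & forall z : T, [|| z == p, z == q | z == r]].
Proof.
move=> T3 pq.
have /cards1P[r Er] : #|~: [set p; q]| == 1.
  by have := cardsC [set p; q]; rewrite cards2 pq T3 => ?; apply/eqP; lia.
have := setC11 r; rewrite -Er !inE negb_or => /andP[rp rq].
exists r; split => // z; case: (eqVneq z p) => //= zp; case: (eqVneq z q) => //= zq.
by rewrite -in_set1 -Er !inE negb_or zp zq.
Qed.

Lemma card_gt1_other (T : finType) (p : T) : 1 < #|T| -> exists q : T, q != p.
Proof.
move=> T2; have /card_gt0P[q] : 0 < #|~: [set p]| by rewrite cardsC1; lia.
by rewrite !inE => qp; exists q.
Qed.

Lemma card_inl (A B : finType) : #|[set z : A + B | if z is inl _ then true else false]| = #|A|.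
Proof. by rewrite card_set_sum big_sumType /= [X in _ + X]big1 // addn0 -sum1_card. Qed.

Lemma card_inr (A B : finType) : #|[set z : A + B | if z is inr _ then true else false]| = #|B|.
Proof. by rewrite card_set_sum big_sumType /= big1 // add0n -sum1_card. Qed.

Lemma sum_sig (T : finType) (P : pred T) (F : T -> nat) :
  \sum_(x : {x | P x}) F (val x) = \sum_(x | P x) F x.
Proof.
rewrite [RHS](reindex_omap (fun x : {x | P x} => val x) insub) => [|x Px]; last by rewrite insubT.
by apply: eq_bigl => x; rewrite (valP x) valK eqxx.
Qed.

Section Graph.
Variable G : graph.
Implicit Types (x w : vert G) (g : edge G) (d : dart G) (M : {set edge G}) (S : {set vert G}).

Definition loopless := forall g, ~~ is_loop g.

Definition mdeg M x := #|[set g in M | incident x g]|.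

Definition ncut S := \sum_g (((ends g).1 \in S) != ((ends g).2 \in S)).

Definition proper_col3 (c : edge G -> 'I_3) :=
  forall v e f, e != f -> incident v e -> incident v f -> c e != c f.

Lemma mdeg_sum M x : mdeg M x = \sum_g ((g \in M) && incident x g).
Proof. by rewrite /mdeg -card_set_sum; apply: eq_card => g; rewrite !inE. Qed.

Lemma deg_sum x : deg x = \sum_g (((ends g).1 == x) + ((ends g).2 == x)).
Proof.
rewrite /deg card_set_sum.
rewrite (eq_bigr (fun d : edge G * bool => (dend (d.1, d.2) == x) : nat)); last by case.
rewrite -(pair_bigA _ (fun g b => (dend (g, b) == x) : nat)).
by apply: eq_bigr => g _; rewrite big_bool addnC.
Qed.

Lemma incident_count x g : ~~ is_loop g ->
  (incident x g : nat) = ((ends g).1 == x) + ((ends g).2 == x).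
Proof.
rewrite /is_loop /incident; case: (ends g) => a b /= ab.
by case: (a =P x) => [ax|]; case: (b =P x) => [bx|] //; rewrite ax bx eqxx in ab.
Qed.

Lemma mdeg_gt1 M x g h : g != h -> g \in M -> h \in M ->
  incident x g -> incident x h -> 1 < mdeg M x.
Proof.
move=> gh gM hM xg xh.
apply: (leq_trans _ (subset_leq_card (A := [set g; h]) _)); first by rewrite cards2 gh.
by apply/subsetP => z; rewrite !inE => /orP[]/eqP->; rewrite ?gM ?hM ?xg ?xh.
Qed.

Lemma mdeg1_edge_eq M x g h : mdeg M x = 1 -> g \in M -> h \in M ->
  incident x g -> incident x h -> g = h.
Proof.
move=> Mx gM hM xg xh; apply/eqP/negPn/negP => gh.
by have := mdeg_gt1 gh gM hM xg xh; rewrite Mx.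
Qed.

Lemma two_connected_ncut : two_connected G ->
  forall S x y, x \in S -> y \notin S -> 2 <= ncut S.
Proof.
move=> [conG bridgeless] S x y xS yS; rewrite leqNgt; apply/negP => cut_lt2.
(* With at most one crossing edge [g0], [S] is closed under adjacency in [G - g0]. *)
have closed_S (g0 : option (edge G)) :
    (forall g, ((ends g).1 \in S) != ((ends g).2 \in S) -> Some g = g0) -> False.
  move=> only_g0.
  have clS : closed (fun a b => [exists f, (Some f != g0) &&
                      ((ends f == (a, b)) || (ends f == (b, a)))]) S.
    move=> a b /existsP[f /andP[fg0 fab]]; apply/eqP; apply: contraNT fg0 => Sab.
    by apply/eqP/only_g0; case/orP: fab => /eqP ->; rewrite //= eq_sym.
  case: g0 only_g0 clS => [g0|] _ clS.
    by have := closed_connect clS (bridgeless g0 x y); rewrite xS (negbTE yS).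
  by have := closed_connect clS (conG x y); rewrite xS (negbTE yS).
case: (pickP (fun g => ((ends g).1 \in S) != ((ends g).2 \in S))) => [g0 g0S|noS].
  apply: (closed_S (Some g0)) => g gS; congr Some; apply/eqP/negPn/negP => gg0.
  by move: cut_lt2; rewrite /ncut (bigD1 g0) //= (bigD1 g) //= g0S gS.
by apply: (closed_S None) => g; rewrite noS.
Qed.

Lemma ncut_ge2_proper : two_connected G ->
  forall S, ~~ ((S == set0) || (S == setT)) -> 2 <= ncut S.
Proof.
move=> conG S; rewrite negb_or => /andP[/set0Pn[x xS]].
rewrite eqEsubset subsetT andTb => /subsetPn[y _ yS].
exact: two_connected_ncut conG S x y xS yS.
Qed.

Lemma set_trivial_mem S : (S == set0) || (S == setT) -> forall x y, (x \in S) = (y \in S).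
Proof. by case/orP => /eqP-> x y; rewrite !inE. Qed.

Lemma ncut_two_connected :
  (forall S x y, x \in S -> y \notin S -> 2 <= ncut S) -> two_connected G.
Proof.
move=> cut_ge2.
(* If [x] cannot reach [y], the component of [x] has a crossing edge that is usable. *)
have connectP (r : rel (vert G)) (ok : pred (edge G)) :
    (forall f a b, ok f -> ends f = (a, b) -> r a b /\ r b a) ->
    (forall S, 2 <= ncut S -> exists f, ok f && (((ends f).1 \in S) != ((ends f).2 \in S))) ->
    forall x y, connect r x y.
  move=> r_ok ok_cut x y; apply/negPn/negP => nxy.
  pose S := [set z | connect r x z].
  have xS : x \in S by rewrite inE connect0.
  have yS : y \notin S by rewrite inE.
  have [f /andP[okf]] := ok_cut S (cut_ge2 S x y xS yS).
  case Ef: (ends f) => [a b]; have [rab rba] := r_ok f a b okf Ef.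
  rewrite !inE /=; case xa: (connect r x a); case xb: (connect r x b) => //= _.
    by rewrite (connect_trans xa (connect1 rab)) in xb.
  by rewrite (connect_trans xb (connect1 rba)) in xa.
split=> [|e].
  apply: (connectP _ predT) => [f a b _ Ef|S].
    by split; apply/existsP; exists f; rewrite Ef eqxx ?orbT.
  case: (pickP (fun g => ((ends g).1 \in S) != ((ends g).2 \in S))) => [g gS|noS].
    by exists g.
  by rewrite /ncut big1 // => g _; rewrite noS.
apply: (connectP _ (fun f => f != e)) => [f a b fe Ef|S].
  by split; apply/existsP; exists f; rewrite Ef fe eqxx ?orbT.
case: (pickP (fun g => (g != e) && (((ends g).1 \in S) != ((ends g).2 \in S)))) => [g gS|noS].
  by exists g.
rewrite /ncut (bigD1 e) //= big1 ?addn0 => [|g ge]; first by case: (_ != _).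
by move: (noS g); rewrite ge => /negbT/negbNE ->.
Qed.

Lemma cubic_two_connected_loopless : cubic G -> two_connected G -> loopless.
Proof.
move=> cubG conG g; apply/negP => g_loop; set v := (ends g).1.
set nloops := \sum_h (((ends h).1 == v) && ((ends h).2 == v)).
have deg_v : 3 = 2 * nloops + ncut [set v].
  rewrite -(cubG v) deg_sum /ncut big_distrr -big_split; apply: eq_bigr => h _.
  by rewrite !inE; case: eqP; case: eqP.
have loop1 : 1 <= nloops by rewrite /nloops (bigD1 g) //= /v -(eqP g_loop) eqxx.
have [h hv] : exists h, ((ends h).1 \in [set v]) != ((ends h).2 \in [set v]).
  case: (pickP (fun h => ((ends h).1 \in [set v]) != ((ends h).2 \in [set v]))) => [h hv|nov].
    by exists h.
  by move: deg_v loop1; rewrite /ncut big1 => [|h _]; [lia | rewrite nov].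
have : 2 <= ncut [set v].
  move: hv; case h1: ((ends h).1 \in _); case h2: ((ends h).2 \in _) => // _.
    exact: (two_connected_ncut conG h1 (negbT h2)).
  exact: (two_connected_ncut conG h2 (negbT h1)).
by move: deg_v loop1; lia.
Qed.

Lemma card_ends_in M S : (forall g, g \in M -> ~~ is_loop g) ->
  (forall x, x \in S -> mdeg M x = 1) ->
  #|S| = \sum_(g in M) (((ends g).1 \in S) + ((ends g).2 \in S)).
Proof.
move=> M_nl M1; rewrite -sum1_card.
rewrite (eq_bigr (fun x => \sum_g ((g \in M) && incident x g))) => [|x xS]; last first.
  by rewrite -mdeg_sum M1.
rewrite exchange_big [RHS]big_mkcond; apply: eq_bigr => g _.
case gM: (g \in M) => /=; last by rewrite big1.
rewrite (eq_bigr (fun x => ((ends g).1 == x) + ((ends g).2 == x))) => [|x _]; last first.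
  exact/incident_count/M_nl.
by rewrite big_split /= !sum_eq_in.
Qed.

Section CubicLoopless.
Hypotheses (cubG : cubic G) (loopG : loopless).

Lemma card_incident x : #|[set g | incident x g]| = 3.
Proof. by rewrite card_set_sum -(cubG x) deg_sum; apply: eq_bigr => g _; apply: incident_count. Qed.

Lemma two_other_incident x g0 : incident x g0 ->
  exists g1 g2, [/\ g1 != g2, g1 != g0, g2 != g0, incident x g1 & incident x g2].
Proof.
move=> xg0.
have /cards2P[g1 [g2 [g12 E]]] : #|[set g | incident x g] :\ g0| == 2.
  by have := cardsD1 g0 [set g | incident x g]; rewrite card_incident inE xg0 => ?; apply/eqP; lia.
have := setU11 g1 [set g2]; have := setU1r g1 (set11 g2).
rewrite -E !inE => /andP[g20 xg2] /andP[g10 xg1].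
by exists g1, g2.
Qed.

Lemma cubic_even_order : ~~ odd #|vert G|.
Proof.
have : 3 * #|vert G| = 2 * #|edge G|.
  transitivity (\sum_(x : vert G) deg x).
    by rewrite (eq_bigr (fun _ => 3)) // sum_nat_const mulnC.
  transitivity (\sum_(g : edge G) 2); last by rewrite sum_nat_const mulnC.
  rewrite (eq_bigr _ (fun x _ => deg_sum x)) exchange_big; apply: eq_bigr => g _.
  by rewrite big_split /= !sum_eq1.
by rewrite -[#|vert G|]odd_double_half; case: odd => /=; lia.
Qed.

Lemma colour_class_mdeg (c : edge G -> 'I_3) : proper_col3 c ->
  forall x i, mdeg [set g | c g == i] x = 1.
Proof.
move=> c_ok x i; pose n (j : 'I_3) := #|[set g | incident x g && (c g == j)]|.
have mdeg_n j : mdeg [set g | c g == j] x = n j.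
  by apply: eq_card => g; rewrite !inE andbC.
have n_le1 j : n j <= 1.
  apply/card_le1_eqP => g h; rewrite !inE => /andP[xg /eqP gj] /andP[xh /eqP hj].
  by apply/eqP/negPn/negP => gh; move: (c_ok x h g gh xh xg); rewrite gj hj eqxx.
have sum_n : \sum_j n j = 3.
  transitivity #|[set g | incident x g]|; last exact: card_incident.
  rewrite card_set_sum (eq_bigr (fun j => \sum_g (incident x g && (c g == j)))) => [|j _];
    last first.
    by rewrite /n card_set_sum.
  rewrite exchange_big; apply: eq_bigr => g _.
  by case: (incident x g) => /=; [rewrite (sum_eq1 (c g)) | rewrite big1].
rewrite mdeg_n; apply/eqP; rewrite eqn_leq n_le1 lt0n; apply/eqP => ni0.
have : \sum_(j | j != i) n j <= \sum_(j | j != i) 1 by apply: leq_sum => j _; apply: n_le1.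
by rewrite sum1_card cardC1 card_ord; move: sum_n; rewrite (bigD1 i) //= ni0; lia.
Qed.

(* Each colour class is a perfect matching, so it meets every vertex of [S] exactly once. *)
Lemma odd_card_colour_cut (c : edge G -> 'I_3) : proper_col3 c -> forall S i,
  odd #|S| = odd (\sum_g ((c g == i) && (((ends g).1 \in S) != ((ends g).2 \in S)))).
Proof.
move=> c_ok S i.
rewrite (@card_ends_in [set g | c g == i] S) => [|g _|x _]; last 2 first.
- exact: loopG.
- exact: colour_class_mdeg.
rewrite big_mkcond (eq_bigr (fun g => ((c g == i) && (((ends g).1 \in S) != ((ends g).2 \in S)))
          + 2 * ((c g == i) && ((ends g).1 \in S) && ((ends g).2 \in S)))) => [|g _]; last first.
  by rewrite inE; case: (c g == i); case: ((ends g).1 \in S); case: ((ends g).2 \in S).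
by rewrite big_split -big_distrr oddD oddM addbF.
Qed.

End CubicLoopless.

Lemma incident_dend d : incident (dend d) d.1.
Proof. by case: d => g [] ; rewrite /incident /dend eqxx ?orbT. Qed.

Lemma dend_flip_neq d : loopless -> dend (flip d) != dend d.
Proof.
move=> loopG; case: d => g b; move: (loopG g); rewrite /is_loop /dend /flip /=.
by case: b => //=; rewrite eq_sym.
Qed.

Section Darts.
Variable w : vert G.

Definition dart_of g : dart G := if (ends g).1 == w then (g, false) else (g, true).
Definition other g := if (ends g).1 == w then (ends g).2 else (ends g).1.

Definition inner_cut S := \sum_(g | ~~ incident w g) (((ends g).1 \in S) != ((ends g).2 \in S)).
Definition darts_into S := \sum_(d | dend d == w) ((dend (flip d) \in S) : nat).
Definition darts_outof S := \sum_(d | dend d == w) ((dend (flip d) \notin S) : nat).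

Lemma dart_of_edge g : (dart_of g).1 = g.
Proof. by rewrite /dart_of; case: ifP. Qed.

Lemma dend_flip_dart_of g : dend (flip (dart_of g)) = other g.
Proof. by rewrite /dart_of /other; case: ifP. Qed.

Lemma dend_dart_of g : incident w g -> dend (dart_of g) == w.
Proof. by rewrite /incident /dart_of /dend; case: eqP => [->|]. Qed.

Lemma dend_dart_of_neq g : ~~ incident w g -> dend (dart_of g) != w.
Proof. by rewrite /dart_of /incident negb_or => /andP[h1 h2]; case: ifP; rewrite /dend. Qed.

Hypothesis loopG : loopless.

Lemma dart_at_inj d d' : dend d == w -> dend d' == w -> d.1 = d'.1 -> d = d'.
Proof.
case: d d' => g b [g' b'] /= dw d'w gg'; subst g'.
case: (eqVneq b b') => [->//|bb']; move: (loopG g) dw d'w; rewrite /is_loop /dend /=.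
by case: b bb'; case: b' => //= _ g_nl /eqP e1 /eqP e2; rewrite e1 e2 eqxx in g_nl.
Qed.

Lemma other_neq g : incident w g -> other g != w.
Proof.
move: (loopG g); rewrite /is_loop /other /incident.
by case: (eqVneq (ends g).1 w) => [->|] //=; rewrite eq_sym.
Qed.

Lemma other_eq g x : incident w g -> x != w -> (other g == x) = incident x g.
Proof.
move: (loopG g); rewrite /is_loop /other /incident.
case: (eqVneq (ends g).1 w) => [->|_] /= => [_ _|_ /eqP -> ] xw.
  by rewrite [w == x]eq_sym (negbTE xw).
by rewrite [w == x]eq_sym (negbTE xw) orbF.
Qed.

Lemma sum_darts_at (Q : edge G -> vert G -> nat) :
  \sum_(d | dend d == w) Q d.1 (dend (flip d)) = \sum_(g | incident w g) Q g (other g).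
Proof.
rewrite big_mkcond /= (eq_bigr (fun d : edge G * bool =>
   if dend (d.1, d.2) == w then Q (d.1, d.2).1 (dend (flip (d.1, d.2))) else 0)); last by case.
rewrite -(pair_bigA _ (fun g b => if dend (g, b) == w then Q (g, b).1 (dend (flip (g, b))) else 0)).
rewrite [RHS]big_mkcond; apply: eq_bigr => g _; rewrite big_bool /dend /flip /other /incident /=.
move: (loopG g); rewrite /is_loop.
by case: (eqVneq (ends g).1 w) => [->|]; case: (eqVneq (ends g).2 w) => [->|] //=; rewrite ?addn0.
Qed.

Lemma deg_split x : x != w ->
  deg x = \sum_(g | ~~ incident w g) (((ends g).1 == x) + ((ends g).2 == x))
        + \sum_(d | dend d == w) ((dend (flip d) == x) : nat).
Proof.
move=> xw; rewrite deg_sum (bigID (incident w)) addnC (sum_darts_at (fun _ z => (z == x) : nat)).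
by congr (_ + _); apply: eq_bigr => g wg; rewrite other_eq // incident_count.
Qed.

Lemma ncut_split S : w \notin S -> ncut S = inner_cut S + darts_into S.
Proof.
move=> wS; rewrite /ncut /inner_cut /darts_into (bigID (incident w)) addnC.
rewrite (sum_darts_at (fun _ z => (z \in S) : nat)).
congr (_ + _); apply: eq_bigr => g wg; move: (other_neq wg); rewrite /other.
move: wg; rewrite /incident; case: (eqVneq (ends g).1 w) => [->|_] /= => [_|/eqP ->] _;
  by rewrite (negbTE wS); case: (_ \in S).
Qed.

Lemma ncut_setU1_split S : w \notin S -> ncut (w |: S) = inner_cut S + darts_outof S.
Proof.
move=> wS; rewrite /ncut /inner_cut /darts_outof (bigID (incident w)) addnC.
rewrite (sum_darts_at (fun _ z => (z \notin S) : nat)).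
congr (_ + _); apply: eq_bigr => g wg; last first.
  move: wg; rewrite /incident /= negb_or => /andP[h1 h2].
  by rewrite !inE (negbTE h1) (negbTE h2).
move: (other_neq wg); rewrite /other; move: wg; rewrite /incident.
case: (eqVneq (ends g).1 w) => [->|h1] /= => [_|/eqP ->] h2;
  by rewrite !in_setU1 eqxx ?(negbTE h1) ?(negbTE h2) /=; case: (_ \in S).
Qed.

Lemma darts_into_outof S : cubic G -> darts_into S + darts_outof S = 3.
Proof.
move=> cubG; rewrite -big_split -(cubG w) /deg -sum1_card big_mkcond [RHS]big_mkcond /=.
by apply: eq_bigr => d _; rewrite inE; case: (dend d == w); case: (_ \in S).
Qed.

Hypothesis conG : two_connected G.

Lemma darts_into_ge2 S : w \notin S ->
  if [exists x, x \in S] then 2 <= inner_cut S + darts_into S else darts_into S == 0.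
Proof.
move=> wS; case: existsP => [[x xS]|noS].
  by rewrite -ncut_split // (two_connected_ncut conG xS wS).
rewrite /darts_into big1 // => d _; case: (boolP (_ \in S)) => // xS.
by case: noS; eexists; apply: xS.
Qed.

Lemma darts_outof_ge2 S : w \notin S ->
  if [exists x, (x != w) && (x \notin S)] then 2 <= inner_cut S + darts_outof S
  else darts_outof S == 0.
Proof.
move=> wS; case: existsP => [[x /andP[xw xS]]|noS].
  rewrite -ncut_setU1_split // (two_connected_ncut conG (setU11 w S) (y := x)) //.
  by rewrite in_setU1 negb_or xw xS.
rewrite /darts_outof big1 // => d /eqP dw; case: (boolP (_ \notin S)) => // xS; case: noS.
by exists (dend (flip d)); rewrite xS -dw dend_flip_neq.
Qed.

End Darts.
End Graph.

Lemma pm_cover3_col3 (G : graph) : pm_cover G 3 -> col3 G.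
Proof.
move=> [Ms [size_Ms Ms_pm Ms_cover]].
have has_M (g : edge G) : has (fun M : {set edge G} => g \in M) Ms.
  by have [M MMs gM] := Ms_cover g; apply/hasP; exists M.
pose i (g : edge G) := find (fun M : {set edge G} => g \in M) Ms.
have i_lt3 g : i g < 3 by apply: leq_trans size_Ms; rewrite -has_find.
exists (fun g => inord (i g)); split=> [g|x g h gh xg xh].
  by have [M /Ms_pm[M_nl _] gM] := Ms_cover g; apply: M_nl.
apply/negP => /eqP/(congr1 val); rewrite /= !inordK // => gh_i.
have MMs : nth set0 Ms (i g) \in Ms by rewrite mem_nth // -has_find.
have gM := nth_find set0 (has_M g); have hM := nth_find set0 (has_M h).
rewrite -/(i g) -/(i h) -gh_i in gM hM.
by have := mdeg_gt1 gh gM hM xg xh; rewrite /mdeg ((Ms_pm _ MMs).2 x).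
Qed.

(** * Perfect matchings of an inflated vertex *)

Section Inflation.
Variables (G : graph) (v : vert G).
Local Notation Gv := (inflate v).
Local Notation D := (dart_at v).

Lemma iend_spec (d : dart G) :
  match iend v d with inl x => val x = dend d | inr p => val p = d end.
Proof. by rewrite /iend; move: (erefl (dend d == v)); case: {2 3}(dend d == v). Qed.

Lemma iend_inl_eq d (x : {x | x != v}) : (iend v d == inl x) = (dend d == val x).
Proof.
have := iend_spec d; case: (iend v d) => [y|p] /= <-.
  by apply/eqP/eqP => [[->]|/val_inj->].
by rewrite (eqP (valP p)); apply/esym/negbTE; rewrite eq_sym; exact: (valP x).
Qed.

Lemma iend_inr_eq d (p : D) : (iend v d == inr p) = (d == val p).
Proof.
have := iend_spec d; case: (iend v d) => [y|q] /= yd; last first.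
  by rewrite -yd; apply/eqP/eqP => [[->]|/val_inj->].
apply/esym/negbTE/eqP => dp; have := valP y; rewrite /= yd dp.
by rewrite (eqP (valP p)) eqxx.
Qed.

Lemma iend_is_inr d : (if iend v d is inr _ then true else false) = (dend d == v).
Proof.
have := iend_spec d; case: (iend v d) => [y|p] /= <-; last by rewrite (eqP (valP p)) eqxx.
apply/esym/negbTE; exact: (valP y).
Qed.

Lemma incident_inflate_inl (x : {x | x != v}) g :
  @incident Gv (inl x) (inl g) = incident (val x) g.
Proof. by rewrite /incident /= !iend_inl_eq. Qed.

Lemma incident_inflate_inr (p : D) g : @incident Gv (inr p) (inl g) = ((val p).1 == g).
Proof.
rewrite /incident /= !iend_inr_eq; case: p => [[h b] hv] /=.
by case: b hv => _; rewrite !xpair_eqE /= ?andbT ?andbF ?orbF // eq_sym.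
Qed.

Lemma incident_inflate_tri (p : D) (t : tri_edge v) :
  @incident Gv (inr p) (inr t) = ((val t).1 == p) || ((val t).2 == p).
Proof. by []. Qed.

Lemma dart_at_incident (p : D) : incident v (val p).1.
Proof. by case: p => d /= /eqP <-; apply: incident_dend. Qed.

Lemma ex_dart_at g : incident v g -> exists p : D, (val p).1 = g.
Proof. by move=> vg; exists (exist _ (dart_of v g) (dend_dart_of vg)); apply: dart_of_edge. Qed.

Lemma tri_edge_between (p q : D) : p != q ->
  exists t : tri_edge v,
    ((val t).1 == p) && ((val t).2 == q) || ((val t).1 == q) && ((val t).2 == p).
Proof.
move=> pq; case: (ltngtP (enum_rank p) (enum_rank q)) => [pq'|qp|/ord_inj/enum_rank_inj epq].
- by exists (exist _ (p, q) pq'); rewrite /= !eqxx.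
- by exists (exist _ (q, p) qp); rewrite /= !eqxx orbT.
- by rewrite epq eqxx in pq.
Qed.

Lemma tri_edge_ends_neq (t : tri_edge v) : (val t).1 != (val t).2.
Proof. by apply/eqP => e12; have := valP t; rewrite /= e12 ltnn. Qed.

Lemma tri_edge_eq (t t' : tri_edge v) :
  (val t).1 \in [:: (val t').1; (val t').2] -> (val t).2 \in [:: (val t').1; (val t').2] -> t = t'.
Proof.
case: t t' => [[a b] ab] [[a' b'] ab'] /=.
rewrite !inE => /orP[]/eqP ea /orP[]/eqP eb; subst => /=; move: ab ab' => /=.
- by move=> ab; have := ab; rewrite /= ltnn.
- by move=> ab ab'; congr exist; apply: eq_irrelevance.
- by move=> /= ab ab'; lia.
- by move=> ab; have := ab; rewrite /= ltnn.
Qed.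

Hypotheses (cubG : cubic G) (loopG : loopless G).

Lemma loopless_inflate : loopless Gv.
Proof.
move=> [g|t]; rewrite /is_loop /=; last first.
  by apply/negP => /eqP [] /eqP; apply/negP/tri_edge_ends_neq.
have := iend_spec (g, false); have := iend_spec (g, true).
case: (iend v (g, true)) => [y|q]; case: (iend v (g, false)) => [x|p] //= ey ex.
  apply/negP => /eqP [] /(congr1 val) /=; rewrite ex ey /dend /= => e12.
  by move: (loopG g); rewrite /is_loop e12 eqxx.
by apply/negP => /eqP [] /(congr1 val) /=; rewrite ex ey.
Qed.

Lemma card_dart_at : #|{: D}| = 3.
Proof. by rewrite card_sig -(cubG v); apply: eq_card => d; rewrite !inE. Qed.

Lemma dart_at_edge_inj (p q : D) : (val p).1 = (val q).1 -> p = q.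
Proof. by move=> pq; apply/val_inj/(dart_at_inj loopG (valP p) (valP q) pq). Qed.

Lemma dart_at_third (p q : D) : p != q ->
  exists r : D, [/\ r != p, r != q & forall z : D, [|| z == p, z == q | z == r]].
Proof. exact: card3_third card_dart_at. Qed.

Lemma card_triangle : #|[set z : vert Gv | if z is inr _ then true else false]| = 3.
Proof. by rewrite card_inr card_dart_at. Qed.

End Inflation.

Section InflationTraces.
Variables (G : graph) (v : vert G).
Local Notation Gv := (inflate v).
Local Notation D := (dart_at v).

(* The traces on [E(G)] of the perfect matchings of [G^v]. *)
Definition near_pm (M : {set edge G}) :=
  (forall x, x != v -> mdeg M x = 1) /\ (mdeg M v = 1 \/ mdeg M v = 3).

(* The last condition accounts for the triangle of [G^v]: its edge opposite to the end of [g]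
   lies in [extend_pm M] iff [g] is the only edge of [M] at [v]. *)
Definition near_pm_cover k :=
  exists Ms : seq {set edge G},
  [/\ size Ms <= k, forall M, M \in Ms -> near_pm M,
      forall g, exists2 M, M \in Ms & g \in M
    & forall g, incident v g -> exists2 M, M \in Ms & (g \in M) && (mdeg M v == 1)].

Definition restrict_pm (M : {set edge Gv}) : {set edge G} := [set g | inl g \in M].

Definition extend_pm (M : {set edge G}) : {set edge Gv} :=
  [set g' : edge Gv | match g' with
                      | inl g => g \in M
                      | inr t => ((val (val t).1).1 \notin M) && ((val (val t).2).1 \notin M)
                      end].

Lemma mdeg_restrict_pm M (x : {x | x != v}) :
  mdeg (restrict_pm M) (val x) = @mdeg Gv M (inl x).
Proof.
rewrite !mdeg_sum big_sumType /= [X in _ = _ + X]big1 ?addn0 => [|t _]; last by rewrite andbF.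
by apply: eq_bigr => g _; rewrite inE incident_inflate_inl.
Qed.

Hypotheses (cubG : cubic G) (loopG : loopless G).

(* Count the ends of [M] on the triangle: each triangle edge of [M] has both ends there. *)
Lemma mdeg_restrict_pm_v M : perfect_matching M ->
  3 = mdeg (restrict_pm M) v + 2 * \sum_(t : tri_edge v) (inr t \in M).
Proof.
move=> [M_nl M_deg]; rewrite -{1}(card_triangle v cubG) (@card_ends_in Gv M) => [|//|x _];
  last exact: M_deg.
rewrite big_mkcond big_sumType /= mdeg_sum big_distrr /=; congr (_ + _); last first.
  by apply: eq_bigr => t _; rewrite !inE; case: (inr t \in M).
apply: eq_bigr => g _; rewrite !inE !iend_is_inr /dend /= -incident_count //.
by case: (inl g \in M).
Qed.

Lemma restrict_pm_near_pm M : perfect_matching M -> near_pm (restrict_pm M).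
Proof.
move=> M_pm; split=> [x xv|].
  by have := mdeg_restrict_pm M (exist _ x xv); rewrite /= => ->; apply: M_pm.2.
by move: (mdeg_restrict_pm_v M_pm); lia.
Qed.

Lemma tri_edge_opposite (p : D) : exists t : tri_edge v, ((val t).1 != p) && ((val t).2 != p).
Proof.
have [q qp] : exists q, q != p by apply: card_gt1_other; rewrite card_dart_at.
have [r [rq rp _]] := dart_at_third cubG qp.
have [t /orP[]/andP[/eqP t1 /eqP t2]] := tri_edge_between rq;
  by exists t; rewrite t1 t2 rp qp.
Qed.

(* The triangle vertices at the ends of [t] are matched by [t], so only the third one can be
   matched through its edge of [G]. *)
Lemma restrict_pm_tri_opposite (M : {set edge Gv}) (t : tri_edge v) (p : D) :
  perfect_matching M -> inr t \in M -> (val t).1 != p -> (val t).2 != p ->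
  (val p).1 \in restrict_pm M /\ mdeg (restrict_pm M) v = 1.
Proof.
move=> M_pm tM t1p t2p.
have t_unmatched (z : D) : z \in [:: (val t).1; (val t).2] -> inl (val z).1 \notin M.
  move=> zt; apply/negP => zM.
  have: 1 < @mdeg Gv M (inr z).
    apply: (mdeg_gt1 _ zM tM); rewrite ?incident_inflate_inr ?incident_inflate_tri //.
    by move: zt; rewrite !inE => /orP[]/eqP->; rewrite eqxx ?orbT.
  by rewrite /mdeg M_pm.2.
have only_p h : h \in restrict_pm M -> incident v h -> h = (val p).1.
  rewrite inE => hM /ex_dart_at[z zh]; rewrite -zh; congr (val _).1.
  have [r [_ _ t_r]] := dart_at_third cubG (tri_edge_ends_neq t).
  have -> : p = r.
    by case/or3P: (t_r p) => /eqP // pt; [rewrite pt eqxx in t1p | rewrite pt eqxx in t2p].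
  case/or3P: (t_r z) => /eqP zt //;
    by have := t_unmatched z; rewrite zt !inE eqxx ?orbT -zt zh hM => /(_ isT).
have mdeg_le1 : mdeg (restrict_pm M) v <= 1.
  apply/card_le1_eqP => h h'; rewrite !inE => /andP[hM vh] /andP[h'M vh'].
  by rewrite (only_p h) ?inE // (only_p h') ?inE.
have mdeg1 : mdeg (restrict_pm M) v = 1 by move: (mdeg_restrict_pm_v M_pm); lia.
split=> //; have /card_gt0P[h] : 0 < mdeg (restrict_pm M) v by rewrite mdeg1.
by rewrite !inE => /andP[hM vh]; rewrite -(only_p h) ?inE.
Qed.

Lemma pm_cover_near_pm_cover k : pm_cover Gv k -> near_pm_cover k.
Proof.
move=> [Ms [size_Ms Ms_pm Ms_cover]]; exists (map restrict_pm Ms); split.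
- by rewrite size_map.
- by move=> _ /mapP[M MMs ->]; apply/restrict_pm_near_pm/Ms_pm.
- move=> g; have [M MMs gM] := Ms_cover (inl g).
  by exists (restrict_pm M); [apply: map_f | rewrite inE].
move=> g /ex_dart_at[p <-].
have [t /andP[t1p t2p]] := tri_edge_opposite p.
have [M MMs tM] := Ms_cover (inr t).
have [pM M1] := restrict_pm_tri_opposite (Ms_pm M MMs) tM t1p t2p.
by exists (restrict_pm M); rewrite ?pM ?M1 //; apply: map_f.
Qed.

End InflationTraces.

Section InflationExtension.
Variables (G : graph) (v : vert G).
Local Notation Gv := (inflate v).
Local Notation D := (dart_at v).
Hypotheses (cubG : cubic G) (loopG : loopless G).

Lemma near_pm_unmatched M (p : D) : near_pm v M -> (val p).1 \notin M ->
  exists2 r : D, r != p & forall e : D, ((val e).1 \notin M) = (e == p) || (e == r).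
Proof.
move=> [_ Mv] pM.
have Mv1 : mdeg M v = 1.
  case: Mv => // Mv3; have: [set g in M | incident v g] = [set g | incident v g].
    apply/eqP; rewrite eqEcard [#|[set g in M | _]|]Mv3 card_incident // leqnn andbT.
    by apply/subsetP => g; rewrite !inE => /andP[].
  by move/setP/(_ (val p).1); rewrite !inE dart_at_incident (negbTE pM).
have [h0] : exists h0, h0 \in [set g in M | incident v g].
  by apply/set0Pn; rewrite -card_gt0 [#|_|]Mv1.
rewrite inE => /andP[h0M /ex_dart_at[z0 z0h0]].
have pz0 : p != z0 by apply: contraNneq pM => ->; rewrite z0h0.
have [r [rp rz0 dart_r]] := dart_at_third cubG pz0.
have rM : (val r).1 \notin M.
  apply/negP => rM; have := mdeg1_edge_eq Mv1 h0M rM.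
  rewrite -z0h0 !dart_at_incident => /(_ isT isT)/esym/(dart_at_edge_inj loopG) rz0'.
  by rewrite rz0' eqxx in rz0.
exists r => // e; case/or3P: (dart_r e) => /eqP->; rewrite ?eqxx ?orbT ?pM ?rM //.
by rewrite z0h0 h0M eq_sym (negbTE pz0) eq_sym (negbTE rz0).
Qed.

Lemma extend_pm_perfect M : near_pm v M -> perfect_matching (extend_pm v M).
Proof.
move=> M_near; split=> [g _|]; first exact: loopless_inflate.
move=> [x|p]; rewrite -/(mdeg _ _) mdeg_sum big_sumType /=.
  rewrite [X in _ + X]big1 ?addn0 => [|t _]; last by rewrite andbF.
  rewrite -(M_near.1 _ (valP x)) mdeg_sum; apply: eq_bigr => g _.
  by rewrite incident_inflate_inl inE.
rewrite (eq_bigr (fun g => ((g \in M) && ((val p).1 == g)) : nat)) => [|g _]; last first.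
  by rewrite incident_inflate_inr inE.
rewrite sum_pred1; case: (boolP ((val p).1 \in M)) => pM.
  rewrite big1 // => t _; rewrite incident_inflate_tri inE.
  by case/orP: (orbN ((val t).1 == p)) => [/eqP->|/negbTE->]; rewrite ?pM ?andbF //=;
     case: ((val t).2 =P p) => [->|]; rewrite ?pM ?andbF.
have [r rp unmatched] := near_pm_unmatched M_near pM.
have [t0 t0pr] : exists t0 : tri_edge v,
    ((val t0).1 == p) && ((val t0).2 == r) || ((val t0).1 == r) && ((val t0).2 == p).
  by apply: tri_edge_between; rewrite eq_sym.
transitivity #|[set t : tri_edge v | (inr t \in extend_pm v M) && @incident Gv (inr p) (inr t)]|.
  by rewrite card_set_sum.
rewrite (_ : [set t | _] = [set t0]) ?cards1 //; apply/setP => t; rewrite !inE incident_inflate_tri.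
rewrite !unmatched; apply/idP/eqP => [|->]; last first.
  by case/orP: t0pr => /andP[/eqP-> /eqP->]; rewrite !eqxx ?orbT.
move=> /andP[/andP[t1 t2] _]; apply: tri_edge_eq; rewrite !inE.
  by case/orP: t0pr => /andP[/eqP-> /eqP->]; rewrite ?(orbC (_ == r)).
by case/orP: t0pr => /andP[/eqP-> /eqP->]; rewrite ?(orbC (_ == r)).
Qed.

Lemma near_pm_cover_pm_cover k : near_pm_cover v k -> pm_cover Gv k.
Proof.
move=> [Ms [size_Ms Ms_near Ms_cover Ms_cover_v]]; exists (map (extend_pm v) Ms); split.
- by rewrite size_map.
- by move=> _ /mapP[M MMs ->]; apply/extend_pm_perfect/Ms_near.
move=> [g|t].
  have [M MMs gM] := Ms_cover g.
  by exists (extend_pm v M); [apply: map_f | rewrite inE].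
have [c [c1 c2 _]] := dart_at_third cubG (tri_edge_ends_neq t).
have [M MMs /andP[cM /eqP Mv1]] := Ms_cover_v _ (dart_at_incident c).
have unmatched (e : D) : e != c -> (val e).1 \notin M.
  apply: contra => eM; apply/eqP/(dart_at_edge_inj loopG).
  exact: mdeg1_edge_eq Mv1 eM cM (dart_at_incident e) (dart_at_incident c).
exists (extend_pm v M); first exact: map_f.
by rewrite inE !unmatched // eq_sym.
Qed.

Lemma near_pm_perfect M : near_pm v M -> mdeg M v = 1 -> perfect_matching M.
Proof.
move=> [M_deg _] Mv1; split=> [g _|x]; first exact: loopG.
by case: (eqVneq x v) => [->|]; [apply: Mv1 | apply: M_deg].
Qed.

(* With at most three members, a member of degree 3 at [v] would leave the three edges at [v]
   to be covered by the at most two other members, each containing only one of them. *)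
Lemma near_pm_cover3_mdeg1 Ms : size Ms <= 3 -> (forall M, M \in Ms -> near_pm v M) ->
  (forall g, incident v g -> exists2 M, M \in Ms & (g \in M) && (mdeg M v == 1)) ->
  forall M, M \in Ms -> mdeg M v = 1.
Proof.
move=> size_Ms Ms_near Ms_cover_v M0 M0Ms; case: (Ms_near M0 M0Ms).2 => // M0v3; exfalso.
pose P := [set M in Ms | mdeg M v == 1].
have P_ge3 : 3 <= #|P|.
  rewrite -(card_incident cubG loopG v) card_set_sum.
  have -> : #|P| = \sum_g \sum_(M in P) ((g \in M) && incident v g).
    rewrite exchange_big -sum1_card; apply: eq_bigr => M.
    by rewrite inE => /andP[_ /eqP Mv1]; rewrite -mdeg_sum.
  apply: leq_sum => g _; case: (boolP (incident v g)) => // vg.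
  have [M MMs /andP[gM Mv1]] := Ms_cover_v g vg.
  by rewrite (bigD1 M) ?inE ?MMs //= gM.
have : P \subset [set M in Ms] :\ M0.
  apply/subsetP => M; rewrite !inE => /andP[-> /eqP Mv1]; rewrite andbT.
  by apply: contra_eqN Mv1 => /eqP->; rewrite M0v3.
move/subset_leq_card; have := cardsD1 M0 [set M in Ms]; rewrite inE M0Ms.
have : #|[set M in Ms]| <= size Ms by rewrite cardsE card_size.
lia.
Qed.

Lemma near_pm_cover_col3 k : k <= 3 -> near_pm_cover v k -> col3 G.
Proof.
move=> k3 [Ms [size_Ms Ms_near Ms_cover Ms_cover_v]]; apply: pm_cover3_col3.
have size3 : size Ms <= 3 by apply: leq_trans k3.
exists Ms; split=> // M MMs.
exact/(near_pm_perfect (Ms_near M MMs))/(near_pm_cover3_mdeg1 size3 Ms_near Ms_cover_v).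
Qed.

Lemma near_pm_cover_two_avoiding (Ms : seq {set edge G}) e :
  (forall M, M \in Ms -> near_pm v M) -> (forall g, exists2 M, M \in Ms & g \in M) ->
  exists M1 M2, [/\ M1 \in Ms, M2 \in Ms, M1 != M2, e \notin M1 & e \notin M2].
Proof.
move=> Ms_near Ms_cover.
pose x := if (ends e).1 != v then (ends e).1 else (ends e).2.
have xv : x != v.
  rewrite /x; case: ifP => // /negbFE/eqP e1v; apply: contra (loopG e) => /eqP e2v.
  by rewrite /is_loop e1v e2v.
have xe : incident x e by rewrite /x /incident; case: ifP; rewrite eqxx ?orbT.
have [g1 [g2 [g12 g1e g2e xg1 xg2]]] := two_other_incident cubG loopG xe.
have [M1 M1Ms g1M1] := Ms_cover g1; have [M2 M2Ms g2M2] := Ms_cover g2.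
have Mx M : M \in Ms -> mdeg M x = 1 by move=> MMs; apply: (Ms_near M MMs).1.
exists M1, M2; split=> //.
- apply: contraNneq g12 => M12; rewrite -M12 in g2M2.
  by rewrite (mdeg1_edge_eq (Mx _ M1Ms) g1M1 g2M2 xg1 xg2).
- by apply: contraNN g1e => eM1; rewrite (mdeg1_edge_eq (Mx _ M1Ms) g1M1 eM1 xg1 xe).
by apply: contraNN g2e => eM2; rewrite (mdeg1_edge_eq (Mx _ M2Ms) g2M2 eM2 xg2 xe).
Qed.

End InflationExtension.

Lemma apex_near_pm_cover (G : graph) (v : vert G) :
  cubic G -> loopless G -> apex v -> near_pm_cover v 4.
Proof. by move=> cubG loopG [_ [cover4 _]]; apply: pm_cover_near_pm_cover. Qed.

Lemma near_pm_cover_apex (G : graph) (v : vert G) :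
  snark G -> near_pm_cover v 4 -> apex v.
Proof.
move=> snarkG cover4; have [conG [cubG not_col3]] := snarkG.
have loopG := cubic_two_connected_loopless cubG conG.
split=> //; split=> [|m /(pm_cover_near_pm_cover cubG loopG) coverm].
  exact: near_pm_cover_pm_cover.
rewrite leqNgt; apply/negP => m3; apply: not_col3.
exact: (near_pm_cover_col3 cubG loopG m3 coverm).
Qed.

(** * 2-sums *)

Lemma colour_choice (T : eqType) (Ms : seq T) (P : pred T) (i0 : 'I_3) (M1 M2 : T) :
  M1 \in Ms -> M2 \in Ms -> M1 != M2 -> ~~ P M1 -> ~~ P M2 -> (exists2 M, M \in Ms & P M) ->
  exists col : T -> 'I_3,
    (forall M, (i0 == col M) = P M) /\ (forall i, exists2 M, M \in Ms & col M = i).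
Proof.
move=> M1Ms M2Ms M12 PM1 PM2 [M0 M0Ms PM0].
have [i1 i10] : exists i1 : 'I_3, i1 != i0 by apply: card_gt1_other; rewrite card_ord.
have [i2 [i21 i20 all_i]] := card3_third (card_ord 3) i10.
exists (fun M => if P M then i0 else if M == M1 then i1 else i2); split=> [M|i].
  case: (P M); first exact: eqxx.
  by case: (M == M1); rewrite eq_sym ?(negbTE i10) ?(negbTE i20).
case/or3P: (all_i i) => /eqP->; [exists M1 | exists M0 | exists M2] => //.
- by rewrite (negbTE PM1) eqxx.
- by rewrite PM0.
- by rewrite (negbTE PM2) eq_sym (negbTE M12).
Qed.

(* [al], [be] say whether the ends [a], [b] of [e] lie in the [H]-side [A] of a cut, [ga], [de]
   the same for [c], [d] and the [K]-side [B]; [tA] says that [A] is empty or all of [V(H)]. *)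
Lemma cut_sum2_arith (tA tB al be ga de : bool) (IH IK : nat) :
  (if tA then al = be else 2 <= (al != be) + IH) ->
  (if tB then ga = de else 2 <= (ga != de) + IK) -> (tA -> tB -> al != ga) ->
  2 <= (al != ga) + (be != de) + IH + IK.
Proof. by case: tA tB al be ga de => [] [] [] [] [] [] /=; lia. Qed.

Section Sum2.
Variables (H K : graph) (e : edge H) (f : edge K) (sw : bool).
Local Notation G := (sum2 e f sw).
Local Notation a := (ends e).1.
Local Notation b := (ends e).2.
Local Notation c := (if sw then (ends f).2 else (ends f).1).
Local Notation d := (if sw then (ends f).1 else (ends f).2).

Lemma sum2_incident_HH x g :
  @incident G (inl x) (inl g) = if g == e then a == x else incident x g.
Proof. by rewrite /incident /=; case: (g == e); rewrite /= ?inj_eq ?orbF //; exact: inl_inj. Qed.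

Lemma sum2_incident_HK x k : @incident G (inl x) (inr k) = (k == f) && (b == x).
Proof. by rewrite /incident /=; case: (k == f); rewrite /= ?inj_eq ?orbF //; exact: inl_inj. Qed.

Lemma sum2_incident_KH y g : @incident G (inr y) (inl g) = (g == e) && (c == y).
Proof. by rewrite /incident /=; case: (g == e); rewrite /= ?inj_eq ?orbF //; exact: inr_inj. Qed.

Lemma sum2_incident_KK y k :
  @incident G (inr y) (inr k) = if k == f then d == y else incident y k.
Proof. by rewrite /incident /=; case: (k == f); rewrite /= ?inj_eq ?orbF //; exact: inr_inj. Qed.

Lemma sum2_sum (F : edge G -> nat) :
  \sum_(g' : edge G) F g' =
  F (inl e) + F (inr f) + \sum_(g | g != e) F (inl g) + \sum_(k | k != f) F (inr k).
Proof. by rewrite big_sumType /= (bigD1 e) //= (bigD1 f) //=; lia. Qed.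

Lemma cubic_sum2 : cubic H -> cubic K -> cubic G.
Proof.
move=> cubH cubK [x|y]; rewrite deg_sum sum2_sum /= !eqxx /= ?(inj_eq inl_inj) ?(inj_eq inr_inj).
- rewrite (eq_bigr (fun g => ((ends g).1 == x) + ((ends g).2 == x))) => [|g ge]; last first.
    by rewrite (negbTE ge) /= !(inj_eq inl_inj).
  rewrite [X in _ + X = _]big1 ?addn0 => [|k kf]; last by rewrite (negbTE kf).
  by rewrite -(cubH x) deg_sum [in RHS](bigD1 e) //=; lia.
rewrite (eq_bigr (fun k => ((ends k).1 == y) + ((ends k).2 == y))) => [|k kf]; last first.
  by rewrite (negbTE kf) /= !(inj_eq inr_inj).
rewrite [X in _ + X + _ = _]big1 ?addn0 => [|g ge]; last by rewrite (negbTE ge).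
by rewrite -(cubK y) deg_sum [in RHS](bigD1 f) //=; case: sw; lia.
Qed.

Lemma two_connected_sum2 : two_connected H -> two_connected K -> two_connected G.
Proof.
move=> conH conK; apply: ncut_two_connected => S x y xS yS.
pose A := [set z | inl z \in S]; pose B := [set z | inr z \in S].
set IH := \sum_(g | g != e) (((ends g).1 \in A) != ((ends g).2 \in A)).
set IK := \sum_(k | k != f) (((ends k).1 \in B) != ((ends k).2 \in B)).
have -> : ncut S = ((a \in A) != (c \in B)) + ((b \in A) != (d \in B)) + IH + IK.
  rewrite /ncut sum2_sum /= !eqxx /= !inE; congr (_ + _ + _ + _); apply: eq_bigr.
    by move=> g ge; rewrite (negbTE ge) /= !inE.
  by move=> k kf; rewrite (negbTE kf) /= !inE.
have ncutA : ncut A = ((a \in A) != (b \in A)) + IH by rewrite /ncut (bigD1 e).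
have ncutB : ncut B = ((c \in B) != (d \in B)) + IK.
  by rewrite /ncut (bigD1 f) //; case: sw => //=; case: (_ \in B); case: (_ \in B).
apply: (cut_sum2_arith (tA := (A == set0) || (A == setT)) (tB := (B == set0) || (B == setT))).
- by case: ifP => [/set_trivial_mem|/negbT/(ncut_ge2_proper conH)]; rewrite -?ncutA.
- by case: ifP => [/set_trivial_mem|/negbT/(ncut_ge2_proper conK)]; rewrite -?ncutB.
case/orP=> /eqP A_triv /orP[]/eqP B_triv; rewrite A_triv B_triv !inE //.
  by case: x xS => z zS; [move/setP/(_ z): A_triv | move/setP/(_ z): B_triv]; rewrite !inE zS.
by case: y yS => z zS; [move/setP/(_ z): A_triv | move/setP/(_ z): B_triv];
  rewrite !inE (negbTE zS).
Qed.

(* [V(K)] has even order, so every colour class crosses it an even number of times; only the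
   two new edges cross it. *)
Lemma sum2_colour_new_edges (gc : edge G -> 'I_3) : cubic H -> cubic K -> loopless G ->
  proper_col3 gc -> gc (inr f) = gc (inl e).
Proof.
move=> cubH cubK loopG gc_ok.
pose S := [set z : vert G | if z is inr _ then true else false].
have := odd_card_colour_cut (cubic_sum2 cubH cubK) loopG gc_ok S (gc (inl e)).
rewrite card_inr (negbTE (cubic_even_order cubK)) sum2_sum /= !eqxx /= !inE /=.
rewrite big1 ?addn0 => [|g ge]; last by rewrite (negbTE ge) !inE andbF.
rewrite big1 ?addn0 => [|k kf]; last by rewrite (negbTE kf) !inE andbF.
by case: eqP.
Qed.

Lemma sum2_col3_left : cubic H -> cubic K -> loopless H -> col3 G -> col3 H.
Proof.
move=> cubH cubK loopH [gc [loopG gc_ok]].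
have same_colour := sum2_colour_new_edges cubH cubK loopG gc_ok.
exists (fun g => gc (inl g)); split=> // x g h gh xg xh.
(* In [G], [e] is still at [a], while at [b] it is replaced by [f], which has the same colour. *)
pose lift g : edge G := if (g == e) && (a != x) then inr f else inl g.
have lift_ok g0 : incident x g0 -> @incident G (inl x) (lift g0) /\ gc (lift g0) = gc (inl g0).
  rewrite /lift; case: (eqVneq g0 e) => [->|g0e] xg0 /=.
    2: by rewrite sum2_incident_HH (negbTE g0e).
  case: (eqVneq a x) => [ax|ax] /=; first by rewrite sum2_incident_HH eqxx ax.
  by rewrite sum2_incident_HK eqxx same_colour; move: xg0; rewrite /incident (negbTE ax).
have [xg' <-] := lift_ok g xg; have [xh' <-] := lift_ok h xh.
apply: (gc_ok (inl x)) => //; rewrite /lift.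
case: (eqVneq g e) gh => [->|ge] gh; case: (eqVneq h e) gh => [->|he] gh //=.
- by case: (a != x); rewrite // (inj_eq inl_inj) eq_sym.
- by case: (a != x); rewrite // (inj_eq inl_inj).
Qed.

Definition sum2_pm (kc : edge K -> 'I_3) (i : 'I_3) (M : {set edge H}) : {set edge G} :=
  [set g' : edge G | match g' with inl g => g \in M | inr k => kc k == i end].

Section ColourClassExtension.
Variables (kc : edge K -> 'I_3) (i : 'I_3) (M : {set edge H}).
Hypothesis e_i : (kc f == i) = (e \in M).

Lemma mdeg_sum2_pm_H x : loopless H -> mdeg (sum2_pm kc i M) (inl x) = mdeg M x.
Proof.
move=> loopH; rewrite !mdeg_sum sum2_sum !inE sum2_incident_HH sum2_incident_HK !eqxx /= e_i.
rewrite [X in _ + X = _]big1 ?addn0 => [|k kf].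
  2: by rewrite inE sum2_incident_HK (negbTE kf) andbF.
rewrite (eq_bigr (fun g => ((g \in M) && incident x g) : nat)) => [|g ge]; last first.
  by rewrite inE sum2_incident_HH (negbTE ge).
rewrite [in RHS](bigD1 e) //=.
by case: (e \in M) => //=; rewrite incident_count //; lia.
Qed.

Lemma mdeg_sum2_pm_K y : loopless K -> mdeg (sum2_pm kc i M) (inr y) = mdeg [set k | kc k == i] y.
Proof.
move=> loopK; rewrite !mdeg_sum sum2_sum !inE sum2_incident_KH sum2_incident_KK !eqxx /= -e_i.
rewrite [X in _ + X + _ = _]big1 ?addn0 => [|g ge].
  2: by rewrite inE sum2_incident_KH (negbTE ge) andbF.
rewrite (eq_bigr (fun k => ((k \in [set k | kc k == i]) && incident y k) : nat)) => [|k kf];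
  last first.
  by rewrite !inE sum2_incident_KK (negbTE kf).
rewrite [in RHS](bigD1 f) //= inE.
by case: (kc f == i) => //=; rewrite incident_count //; case: sw; lia.
Qed.

End ColourClassExtension.

(* Every member [M] of the cover is extended by the colour class of [K] whose colour [col M]
   on [f] agrees with whether [e] is in [M]; two members avoiding [e] realize the two other
   colours. *)
Lemma near_pm_cover_sum2 (u : vert H) (kc : edge K -> 'I_3) :
  cubic H -> loopless H -> cubic K -> loopless K -> proper_col3 kc ->
  near_pm_cover u 4 -> near_pm_cover (inl u : vert G) 4.
Proof.
move=> cubH loopH cubK loopK kc_ok [Ms [size_Ms Ms_near Ms_cover Ms_cover_u]].
have [M1 [M2 [M1Ms M2Ms M12 eM1 eM2]]] := near_pm_cover_two_avoiding cubH loopH e Ms_near Ms_cover.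
have [col [col_e col_onto]] :=
  colour_choice (P := fun M : {set edge H} => e \in M) (kc f) M1Ms M2Ms M12 eM1 eM2 (Ms_cover e).
pose ext M := sum2_pm kc (col M) M.
exists (map ext Ms); split.
- by rewrite size_map.
- move=> _ /mapP[M MMs ->]; split=> [[x|y] xu|]; rewrite ?mdeg_sum2_pm_H ?mdeg_sum2_pm_K //.
  + by apply: (Ms_near M MMs).1; apply: contra xu => /eqP->.
  + exact: colour_class_mdeg.
  + exact: (Ms_near M MMs).2.
- move=> [g|k].
    have [M MMs gM] := Ms_cover g.
    by exists (ext M); [apply: map_f | rewrite inE].
  have [M MMs colM] := col_onto (kc k).
  by exists (ext M); [apply: map_f | rewrite inE colM].
move=> [g|k] ug.
  have ug' : incident u g.
    move: ug; rewrite sum2_incident_HH; case: (eqVneq g e) => [->|//] /eqP <-.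
    by rewrite /incident eqxx.
  have [M MMs /andP[gM /eqP Mu1]] := Ms_cover_u g ug'.
  by exists (ext M); [apply: map_f | rewrite inE gM mdeg_sum2_pm_H ?Mu1].
move: ug; rewrite sum2_incident_HK => /andP[/eqP-> /eqP bu].
have ue : incident u e by rewrite /incident bu eqxx orbT.
have [M MMs /andP[eM /eqP Mu1]] := Ms_cover_u e ue.
by exists (ext M); [apply: map_f | rewrite inE col_e eM mdeg_sum2_pm_H ?Mu1].
Qed.

End Sum2.

(** * 3-sums *)

(* For the [H]-side [A] of a cut, [a] and [a'] count the edges from [u'] into [A] and into the
   rest of [H - u'], [nA] says that [A] is nonempty and [fA] that it misses a vertex of [H - u'];
   likewise on the [K]-side.  [N] counts the connecting edges crossing the cut. *)
Lemma cut_sum3_arith (nA fA nB fB : bool) (IH IK a a' b b' N : nat) :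
  a + a' = 3 -> b + b' = 3 -> a <= N + b -> b <= N + a -> a' <= N + b' -> b' <= N + a' ->
  (if nA then 2 <= IH + a else a == 0) -> (if fA then 2 <= IH + a' else a' == 0) ->
  (if nB then 2 <= IK + b else b == 0) -> (if fB then 2 <= IK + b' else b' == 0) ->
  nA || nB -> fA || fB -> 2 <= IH + IK + N.
Proof. by case: nA fA nB fB => [] [] [] [] /=; lia. Qed.

Section Sum3.
Variables (H K : graph) (u' : vert H) (v' : vert K) (phi : dart H -> dart K).
Local Notation G := (sum3 u' v' phi).
Local Notation N := {d : dart H | s3new u' v' phi d}.

Lemma sum3_incident_HH (x : {x | x != u'}) (g : {g | ~~ incident u' g}) :
  @incident G (inl x) (inl (inl g)) = incident (val x) (val g).
Proof. by rewrite /incident /= !(inj_eq inl_inj). Qed.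

Lemma sum3_incident_HN (x : {x | x != u'}) (d : N) :
  @incident G (inl x) (inr d) = (dend (flip (val d)) == val x).
Proof. by rewrite /incident /= (inj_eq inl_inj) orbF. Qed.

Lemma sum3_incident_KK (y : {y | y != v'}) (k : {k | ~~ incident v' k}) :
  @incident G (inr y) (inl (inr k)) = incident (val y) (val k).
Proof. by rewrite /incident /= !(inj_eq inr_inj). Qed.

Lemma sum3_incident_KN (y : {y | y != v'}) (d : N) :
  @incident G (inr y) (inr d) = (dend (flip (phi (val d))) == val y).
Proof. by rewrite /incident /= (inj_eq inr_inj). Qed.

Lemma sum3_sum (F : edge G -> nat) :
  \sum_(g' : edge G) F g' =
  \sum_(g : {g | ~~ incident u' g}) F (inl (inl g))
  + \sum_(k : {k | ~~ incident v' k}) F (inl (inr k)) + \sum_(d : N) F (inr d).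
Proof. by rewrite !big_sumType. Qed.

Lemma sum_bij_darts (F : dart K -> nat) : bij_darts u' v' phi ->
  \sum_(d | dend d == u') F (phi d) = \sum_(d' | dend d' == v') F d'.
Proof.
move=> [phi_at phi_inj phi_onto]; pose A := [set d : dart H | dend d == u'].
have phiA : phi @: A = [set d' : dart K | dend d' == v'].
  apply/setP => d'; rewrite inE; apply/imsetP/idP => [[d]|/phi_onto[d du <-]].
    by rewrite inE => du ->; apply: phi_at.
  by exists d; rewrite ?inE.
have inj : {in A &, injective phi} by move=> x y; rewrite !inE; apply: phi_inj.
transitivity (\sum_(d in A) F (phi d)); first by apply: eq_bigl => d; rewrite inE.
by rewrite -(big_imset _ inj) phiA; apply: eq_bigl => d'; rewrite inE.
Qed.

Hypotheses (loopH : loopless H) (loopK : loopless K) (phi_bij : bij_darts u' v' phi).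

Lemma s3new_dend d : s3new u' v' phi d = (dend d == u').
Proof.
case: phi_bij => phi_at _ _; rewrite /s3new; case: (eqVneq (dend d) u') => //= du.
by rewrite -{1}du dend_flip_neq //= -(eqP (phi_at d (introT eqP du))) dend_flip_neq.
Qed.

Lemma sum3_new_sum (F : dart H -> nat) : \sum_(d : N) F (val d) = \sum_(d | dend d == u') F d.
Proof. by rewrite sum_sig; apply: eq_bigl => d; apply: s3new_dend. Qed.

Lemma cubic_sum3 : cubic H -> cubic K -> cubic G.
Proof.
move=> cubH cubK [x|y]; rewrite deg_sum sum3_sum.
- rewrite [X in _ + X + _]big1 ?addn0 // -(cubH (val x)) (deg_split loopH (valP x)).
  congr (_ + _).
    rewrite -(sum_sig (fun g => ~~ incident u' g)
                      (fun g => ((ends g).1 == val x) + ((ends g).2 == val x))).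
    by apply: eq_bigr => g _; rewrite /= !(inj_eq inl_inj).
  rewrite -(sum3_new_sum (fun d => (dend (flip d) == val x) : nat)).
  by apply: eq_bigr => d _; rewrite /= (inj_eq inl_inj) addn0.
rewrite [X in X + _ + _]big1 ?add0n // -(cubK (val y)) (deg_split loopK (valP y)).
congr (_ + _).
  rewrite -(sum_sig (fun k => ~~ incident v' k)
                    (fun k => ((ends k).1 == val y) + ((ends k).2 == val y))).
  by apply: eq_bigr => k _; rewrite /= !(inj_eq inr_inj).
rewrite -(sum_bij_darts (fun d => (dend (flip d) == val y) : nat)) //.
rewrite -(sum3_new_sum (fun d => (dend (flip (phi d)) == val y) : nat)).
by apply: eq_bigr => d _; rewrite /= (inj_eq inr_inj).
Qed.

Definition sum3_side_H (S : {set vert G}) : {set vert H} :=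
  [set z | if insub z is Some z' then (inl z' : vert G) \in S else false].
Definition sum3_side_K (S : {set vert G}) : {set vert K} :=
  [set z | if insub z is Some z' then (inr z' : vert G) \in S else false].

Lemma mem_sum3_side_H S (z : {x | x != u'}) : (val z \in sum3_side_H S) = (inl z \in S).
Proof. by case: z => z zu; rewrite inE /= (insubT (fun x => x != u') zu). Qed.

Lemma mem_sum3_side_K S (z : {y | y != v'}) : (val z \in sum3_side_K S) = (inr z \in S).
Proof. by case: z => z zv; rewrite inE /= (insubT (fun y => y != v') zv). Qed.

Lemma notin_sum3_side_H S : u' \notin sum3_side_H S.
Proof. by rewrite inE insubF ?eqxx. Qed.

Lemma notin_sum3_side_K S : v' \notin sum3_side_K S.
Proof. by rewrite inE insubF ?eqxx. Qed.

Lemma ncut_sum3 S : ncut S =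
  inner_cut u' (sum3_side_H S) + inner_cut v' (sum3_side_K S) +
  \sum_(d | dend d == u')
     ((dend (flip d) \in sum3_side_H S) != (dend (flip (phi d)) \in sum3_side_K S)).
Proof.
rewrite /ncut sum3_sum; congr (_ + _ + _).
- rewrite /inner_cut -(sum_sig (fun g => ~~ incident u' g)
    (fun g => ((ends g).1 \in sum3_side_H S) != ((ends g).2 \in sum3_side_H S))).
  by apply: eq_bigr => g _; rewrite /= -!mem_sum3_side_H.
- rewrite /inner_cut -(sum_sig (fun k => ~~ incident v' k)
    (fun k => ((ends k).1 \in sum3_side_K S) != ((ends k).2 \in sum3_side_K S))).
  by apply: eq_bigr => k _; rewrite /= -!mem_sum3_side_K.
rewrite -(sum3_new_sum (fun d =>
  (dend (flip d) \in sum3_side_H S) != (dend (flip (phi d)) \in sum3_side_K S))).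
by apply: eq_bigr => d _; rewrite /= -mem_sum3_side_H -mem_sum3_side_K.
Qed.

Lemma two_connected_sum3 : two_connected H -> two_connected K -> cubic H -> cubic K ->
  two_connected G.
Proof.
move=> conH conK cubH cubK; apply: ncut_two_connected => S x y xS yS.
set A := sum3_side_H S; set B := sum3_side_K S; rewrite ncut_sum3 -/A -/B.
have uA := notin_sum3_side_H S; have vB := notin_sum3_side_K S.
have intoB : darts_into v' B = \sum_(d | dend d == u') ((dend (flip (phi d)) \in B) : nat).
  by rewrite (sum_bij_darts (fun d => (dend (flip d) \in B) : nat)).
have outofB : darts_outof v' B = \sum_(d | dend d == u') ((dend (flip (phi d)) \notin B) : nat).
  by rewrite (sum_bij_darts (fun d => (dend (flip d) \notin B) : nat)).
apply: (cut_sum3_arith (a := darts_into u' A) (a' := darts_outof u' A)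
                       (b := darts_into v' B) (b' := darts_outof v' B)).
- exact: darts_into_outof.
- exact: darts_into_outof.
- rewrite intoB -big_split; apply: leq_sum => d _; by case: (_ \in A); case: (_ \in B).
- rewrite intoB -big_split; apply: leq_sum => d _; by case: (_ \in A); case: (_ \in B).
- rewrite outofB -big_split; apply: leq_sum => d _; by case: (_ \in A); case: (_ \in B).
- rewrite outofB -big_split; apply: leq_sum => d _; by case: (_ \in A); case: (_ \in B).
- exact: darts_into_ge2.
- exact: darts_outof_ge2.
- exact: darts_into_ge2.
- exact: darts_outof_ge2.
- by case: x xS => z zS; apply/orP; [left | right]; apply/existsP; exists (val z);
    rewrite ?mem_sum3_side_H ?mem_sum3_side_K.
by case: y yS => z zS; apply/orP; [left | right]; apply/existsP; exists (val z);
  rewrite ?mem_sum3_side_H ?mem_sum3_side_K zS (valP z).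
Qed.

(* [V(H) - u'] has odd order, so each of the three colours appears an odd number of times on
   the three connecting edges, i.e. exactly once. *)
Lemma sum3_connecting_colours_inj (c : edge G -> 'I_3) : cubic H -> cubic K -> loopless G ->
  proper_col3 c -> forall d1 d2 : N, d1 != d2 -> c (inr d1) != c (inr d2).
Proof.
move=> cubH cubK loopG c_ok.
pose S := [set z : vert G | if z is inl _ then true else false].
have oddS : odd #|S|.
  rewrite card_inl card_sig cardC1; have : 0 < #|vert H| by apply/card_gt0P; exists u'.
  by move: (cubic_even_order cubH); case: #|vert H| => //= m; rewrite negbK.
pose n (i : 'I_3) := \sum_(d : N) (c (inr d) == i).
have odd_n i : odd (n i).
  move: oddS; rewrite (odd_card_colour_cut (cubic_sum3 cubH cubK) loopG c_ok S i) sum3_sum.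
  rewrite big1 ?add0n => [|g _]; last by rewrite !inE andbF.
  rewrite big1 ?add0n => [|k _]; last by rewrite !inE andbF.
  by rewrite /n; under eq_bigr => d _ do rewrite !inE andbT.
have sum_n : \sum_i n i = 3.
  rewrite exchange_big (eq_bigr (fun=> 1)) => [|d _]; last exact: sum_eq1.
  rewrite (sum3_new_sum (fun=> 1)) -(cubH u') /deg -sum1_card; apply: eq_bigl => d; by rewrite inE.
have n1 i : n i = 1.
  have : \sum_(j | j != i) 1 <= \sum_(j | j != i) n j.
    by apply: leq_sum => j _; have := odd_n j; case: (n j).
  rewrite sum1_card cardC1 card_ord; move: sum_n (odd_n i); rewrite (bigD1 i) //=.
  by case: (n i) => [|[|m]] //=; lia.
move=> d1 d2 d12; apply/negP => /eqP c12.
have := n1 (c (inr d1)); rewrite /n (bigD1 d1) //= eqxx (bigD1 d2) 1?eq_sym //= -c12 eqxx.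
lia.
Qed.

(* The edge of [G] that carries [g]: an edge at [u'] becomes its connecting edge. The default
   [g0] is never used. *)
Definition sum3_edge (g0 : edge G) (g : edge H) : edge G :=
  if insub (dart_of u' g) : option N is Some d then inr d
  else if insub g : option {g | ~~ incident u' g} is Some g' then inl (inl g') else g0.

Lemma sum3_edge_at g0 g : incident u' g ->
  exists d : N, sum3_edge g0 g = inr d /\ val d = dart_of u' g.
Proof.
move=> ug; have new : s3new u' v' phi (dart_of u' g) by rewrite s3new_dend // dend_dart_of.
by exists (exist _ (dart_of u' g) new); rewrite /sum3_edge (insubT (s3new u' v' phi) new).
Qed.

Lemma sum3_edge_notat g0 g : ~~ incident u' g ->
  exists g' : {g | ~~ incident u' g}, sum3_edge g0 g = inl (inl g') /\ val g' = g.
Proof.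
move=> ug; exists (exist _ g ug).
rewrite /sum3_edge insubF ?(insubT (fun g => ~~ incident u' g) ug) //.
by rewrite s3new_dend //; apply/negbTE/dend_dart_of_neq.
Qed.

Lemma sum3_edge_inj g0 : injective (sum3_edge g0).
Proof.
move=> g h; case: (boolP (incident u' g)) => ug; case: (boolP (incident u' h)) => uh.
- have [dg [-> dgg]] := sum3_edge_at g0 ug; have [dh [-> dhh]] := sum3_edge_at g0 uh.
  by move=> gh; rewrite -(dart_of_edge u' g) -(dart_of_edge u' h) -dgg -dhh (inr_inj gh).
- by have [dg [-> _]] := sum3_edge_at g0 ug; have [h' [-> _]] := sum3_edge_notat g0 uh.
- by have [g' [-> _]] := sum3_edge_notat g0 ug; have [dh [-> _]] := sum3_edge_at g0 uh.
have [g' [-> <-]] := sum3_edge_notat g0 ug; have [h' [-> <-]] := sum3_edge_notat g0 uh.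
by move=> gh; rewrite (inl_inj (inl_inj gh)).
Qed.

Lemma sum3_edge_incident g0 (x : {x | x != u'}) g :
  incident (val x) g -> @incident G (inl x) (sum3_edge g0 g).
Proof.
move=> xg; case: (boolP (incident u' g)) => ug.
  have [d [-> dg]] := sum3_edge_at g0 ug.
  by rewrite sum3_incident_HN dg dend_flip_dart_of other_eq // (valP x).
by have [g' [-> g'g]] := sum3_edge_notat g0 ug; rewrite sum3_incident_HH g'g.
Qed.

Lemma sum3_col3_left : cubic H -> cubic K -> col3 G -> col3 H.
Proof.
move=> cubH cubK [c [loopG c_ok]].
have [d0 d0u] : exists d0 : dart H, dend d0 == u'.
  have /card_gt0P[d0] : 0 < deg u' by rewrite cubH.
  by rewrite inE => d0u; exists d0.
have new0 : s3new u' v' phi d0 by rewrite s3new_dend.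
pose g0 : edge G := inr (exist _ d0 new0).
exists (fun g => c (sum3_edge g0 g)); split=> // x g h gh xg xh.
have tau_neq : sum3_edge g0 g != sum3_edge g0 h by rewrite (inj_eq (@sum3_edge_inj g0)).
case: (eqVneq x u') => [xu|xu].
  subst x; have [dg [Eg _]] := sum3_edge_at g0 xg; have [dh [Eh _]] := sum3_edge_at g0 xh.
  by rewrite Eg Eh in tau_neq *; apply: sum3_connecting_colours_inj.
by apply: (c_ok (inl (exist _ x xu))); rewrite // sum3_edge_incident.
Qed.

Section ColourClassExtension.
Variable kc : edge K -> 'I_3.
Hypothesis kc_ok : proper_col3 kc.

(* The colour of the edge of [K] joined to the edge of [M] at [u'] ([ord0] if there is none). *)
Definition sum3_colour (M : {set edge H}) : 'I_3 :=
  if [pick g | (g \in M) && incident u' g] is Some g then kc (phi (dart_of u' g)).1 else ord0.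

Definition sum3_pm (M : {set edge H}) : {set edge G} :=
  [set g' : edge G | match g' with
                     | inl (inl g) => val g \in M
                     | inl (inr k) => kc (val k) == sum3_colour M
                     | inr d => (val d).1 \in M
                     end].

(* The edges at [v'] have distinct colours, so exactly one of them has the chosen colour. *)
Lemma sum3_colour_at (M : {set edge H}) : mdeg M u' = 1 ->
  forall d, dend d == u' -> (d.1 \in M) = (kc (phi d).1 == sum3_colour M).
Proof.
case: phi_bij => phi_at phi_inj _ Mu1 d du.
rewrite /sum3_colour; case: pickP => [g0 /andP[g0M ug0]|none]; last first.
  have /card_gt0P[g0] : 0 < mdeg M u' by rewrite Mu1.
  by rewrite inE => g0u; move: (none g0); rewrite g0u.
pose d0 := dart_of u' g0; have d0u : dend d0 == u' by apply: dend_dart_of.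
have -> : (d.1 \in M) = (d == d0).
  apply/idP/eqP => [dM|->]; last by rewrite /d0 dart_of_edge.
  apply: (dart_at_inj loopH du d0u); rewrite /d0 dart_of_edge.
  by apply: (mdeg1_edge_eq Mu1) => //; rewrite -(eqP du) incident_dend.
apply/eqP/eqP => [->//|same_colour]; apply/eqP/negPn/negP => dd0.
have edges_neq : (phi d).1 != (phi d0).1.
  apply: contra dd0 => /eqP/(dart_at_inj loopK (phi_at _ du) (phi_at _ d0u)) /phi_inj.
  by rewrite !inE => /(_ du d0u) ->.
have v'd : incident v' (phi d).1 by rewrite -(eqP (phi_at _ du)) incident_dend.
have v'd0 : incident v' (phi d0).1 by rewrite -(eqP (phi_at _ d0u)) incident_dend.
by have := kc_ok edges_neq v'd v'd0; rewrite same_colour eqxx.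
Qed.

Lemma mdeg_sum3_pm_H (M : {set edge H}) (x : {x | x != u'}) :
  mdeg (sum3_pm M) (inl x) = mdeg M (val x).
Proof.
rewrite !mdeg_sum sum3_sum [X in _ + X + _]big1 ?addn0 => [|k _]; last by rewrite andbF.
rewrite [RHS](bigID (incident u')) /= [RHS]addnC.
congr (_ + _).
  rewrite -(sum_sig (fun g => ~~ incident u' g) (fun g => (g \in M) && incident (val x) g)).
  by apply: eq_bigr => g _; rewrite inE sum3_incident_HH.
rewrite (eq_bigr (fun d : N => (((val d).1 \in M) && (dend (flip (val d)) == val x)) : nat)).
  rewrite (sum3_new_sum (fun d => ((d.1 \in M) && (dend (flip d) == val x)) : nat)).
  rewrite (sum_darts_at u' loopH (fun g z => ((g \in M) && (z == val x)) : nat)).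
  by apply: eq_bigr => g ug; rewrite other_eq // (valP x).
by move=> d _; rewrite inE sum3_incident_HN.
Qed.

Lemma mdeg_sum3_pm_K (M : {set edge H}) (y : {y | y != v'}) : mdeg M u' = 1 ->
  mdeg (sum3_pm M) (inr y) = mdeg [set k | kc k == sum3_colour M] (val y).
Proof.
move=> Mu1; rewrite !mdeg_sum sum3_sum [X in X + _ + _]big1 ?add0n => [|g _]; last by rewrite andbF.
rewrite [RHS](bigID (incident v')) /= [RHS]addnC.
congr (_ + _).
  rewrite -(sum_sig (fun k => ~~ incident v' k)
             (fun k => (k \in [set k | kc k == sum3_colour M]) && incident (val y) k)).
  by apply: eq_bigr => k _; rewrite !inE sum3_incident_KK.
rewrite (eq_bigr (fun d : N => (((val d).1 \in M) && (dend (flip (phi (val d))) == val y)) : nat)).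
  rewrite (sum3_new_sum (fun d => ((d.1 \in M) && (dend (flip (phi d)) == val y)) : nat)).
  rewrite (eq_bigr (fun d =>
             ((kc (phi d).1 == sum3_colour M) && (dend (flip (phi d)) == val y)) : nat)).
    rewrite (sum_bij_darts (fun d' =>
               ((kc d'.1 == sum3_colour M) && (dend (flip d') == val y)) : nat)) //.
    rewrite (sum_darts_at v' loopK (fun k z => ((kc k == sum3_colour M) && (z == val y)) : nat)).
    by apply: eq_bigr => k vk; rewrite other_eq // ?(valP y) // inE.
  by move=> d du; rewrite (sum3_colour_at Mu1 du).
by move=> d _; rewrite inE sum3_incident_KN.
Qed.

Lemma near_pm_cover_sum3 (u : vert H) (hu : u != u') :
  cubic K -> near_pm_cover u 4 -> near_pm_cover (@sum3_vH H K u' v' phi u hu) 4.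
Proof.
move=> cubK [Ms [size_Ms Ms_near Ms_cover Ms_cover_u]].
have Mu'1 M : M \in Ms -> mdeg M u' = 1 by move=> MMs; apply: (Ms_near M MMs).1; rewrite eq_sym.
have mdeg_u M : mdeg (sum3_pm M) (@sum3_vH H K u' v' phi u hu) = mdeg M u by apply: mdeg_sum3_pm_H.
exists (map sum3_pm Ms); split.
- by rewrite size_map.
- move=> _ /mapP[M MMs ->]; split=> [[x|y] xu|]; last by rewrite mdeg_u; apply: (Ms_near M MMs).2.
    rewrite mdeg_sum3_pm_H; apply: (Ms_near M MMs).1.
    by apply: contra xu => /eqP xu; apply/eqP; congr inl; apply: val_inj.
  by rewrite mdeg_sum3_pm_K ?Mu'1 //; apply: colour_class_mdeg.
- move=> [[g|k]|d].
  + have [M MMs gM] := Ms_cover (val g).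
    by exists (sum3_pm M); [apply: map_f | rewrite inE].
  + have /card_gt0P[k0] : 0 < mdeg [set k0 | kc k0 == kc (val k)] v' by rewrite colour_class_mdeg.
    rewrite !inE => /andP[/eqP k0k v'k0].
    have [d0 d0u phid0] : exists2 d0, dend d0 == u' & phi d0 = dart_of v' k0.
      by case: phi_bij => _ _; apply; apply: dend_dart_of.
    have [M MMs d0M] := Ms_cover d0.1.
    exists (sum3_pm M); first exact: map_f.
    by rewrite inE -k0k -(dart_of_edge v' k0) -phid0 -sum3_colour_at ?Mu'1.
  + have [M MMs dM] := Ms_cover (val d).1.
    by exists (sum3_pm M); [apply: map_f | rewrite inE].
move=> [[g|k]|d] ug //.
  have [M MMs /andP[gM Mu1]] := Ms_cover_u _ ug.
  by exists (sum3_pm M); [apply: map_f | rewrite inE gM mdeg_u].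
rewrite sum3_incident_HN /= in ug.
have ud : incident u (val d).1 by rewrite -(eqP ug) incident_dend.
have [M MMs /andP[dM Mu1]] := Ms_cover_u _ ud.
by exists (sum3_pm M); [apply: map_f | rewrite inE dM mdeg_u].
Qed.

End ColourClassExtension.

End Sum3.

Unset Implicit Arguments.

Theorem lemma6p6 (H K : graph) :
  two_connected H -> cubic H -> two_connected K -> cubic K ->
  snark H -> pmi_ge H 5 -> col3 K ->
  (forall (e : edge H) (f : edge K) (sw : bool) (u : vert H),
      apex u -> @apex (sum2 e f sw) (inl u)) /\
  (forall (u' : vert H) (v' : vert K) (phi : dart H -> dart K),
      bij_darts u' v' phi ->
      forall (u : vert H) (hu : u != u'),
        apex u -> @apex (sum3 u' v' phi) (@sum3_vH H K u' v' phi u hu)).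
Proof.
move=> conH cubH conK cubK [_ [_ not_col3H]] _ col3K.
have [kc [_ kc_ok]] : exists kc, _ /\ proper_col3 kc := col3K.
have loopH := cubic_two_connected_loopless cubH conH.
have loopK := cubic_two_connected_loopless cubK conK.
split=> [e f sw u apex_u | u' v' phi phi_bij u hu apex_u];
  have cover_u := apex_near_pm_cover cubH loopH apex_u; apply: near_pm_cover_apex.
- split; first exact: two_connected_sum2.
  split; first exact: cubic_sum2.
  by move/sum2_col3_left => /(_ cubH cubK loopH).
- exact: near_pm_cover_sum2 cubH loopH cubK loopK kc_ok cover_u.
- split; first exact: two_connected_sum3.
  split; first exact: cubic_sum3.
  by move/sum3_col3_left => /(_ loopH loopK phi_bij cubH cubK).
by apply: (near_pm_cover_sum3 loopH loopK phi_bij kc_ok hu cubK).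
Qed.
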